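(* If $A,B,C,X$ are $N\times N$ real symmetric positive semidefinite matrices, then \[ \det(A+X)+\det(B+X)+\det(C+X)+\det(A+B+C+X)\geq\det(A+B+X)+\det(B+C+X)+\det(C+A+X)+\det X. \] *)

From mathcomp Require Import all_boot all_order all_algebra.
From mathcomp Require Import reals.
Set Implicit Arguments. Unset Strict Implicit. Unset Printing Implicit Defensive.
Import GRing.Theory Num.Theory.
Local Open Scope ring_scope.

Definition psd (R : realType) (N : nat) (A : 'M[R]_N) : Prop :=
  A^T = A /\ forall x : 'rV[R]_N, 0 <= (x *m A *m x^T) ord0 ord0.

From mathcomp Require Import all_boot all_order all_algebra perm ring lra.
From mathcomp Require Import reals.
Set Implicit Arguments. Unset Strict Implicit. Unset Printing Implicit Defensive.
Import Order.TTheory GRing.Theory Num.Theory.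
Local Open Scope ring_scope.

(* Every positive semidefinite matrix is a Gram matrix L^T L (Cholesky), so
   P(a, b, c) := a A + b B + c C + X is the weighted Gram matrix of the rows of
   La, Lb, Lc, Lx, with weights a, b, c, 1.  Expanding the determinant and
   symmetrising over permutations (Cauchy-Binet with repetitions) gives
   N! det P(a, b, c) = sum_f (prod_i weight (f i)) det (W_f)^2, where f picks
   N of these rows and W_f stacks them.  The inequality says that the third
   finite difference of det P over {0,1}^3 is nonnegative; for each f its
   coefficient is (1 - alpha)(1 - beta)(1 - gamma), where alpha is 1 if f picks
   no row of La and 0 otherwise, and similarly for beta and gamma. *)

Lemma sum_row_gram (R : pzSemiRingType) m n (M : 'M[R]_(m, n)) :
  \sum_r (row r M)^T *m row r M = M^T *m M.
Proof.
apply/matrixP => i j; rewrite summxE mxE.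
by apply: eq_bigr => r _; rewrite mxE big_ord1 !mxE.
Qed.

Section WeightedGram.
Variables (R : comNzRingType) (N : nat) (K : finType) (w : K -> 'rV[R]_N).

Definition weighted_gram (d : K -> R) : 'M[R]_N :=
  \sum_k d k *: ((w k)^T *m w k).

Definition stack_rows (f : {ffun 'I_N -> K}) : 'M[R]_N := \matrix_i w (f i).

Lemma weighted_gramE d i j :
  weighted_gram d i j = \sum_k d k * w k 0 i * w k 0 j.
Proof.
rewrite summxE; apply: eq_bigr => k _.
by rewrite mxE mxE big_ord1 !mxE mulrA.
Qed.

Lemma stack_rowsE f i j : stack_rows f i j = w (f i) 0 j.
Proof. by rewrite mxE. Qed.

Lemma det_weighted_gram_expand d :
  \det (weighted_gram d) = \sum_(f : {ffun 'I_N -> K})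
    (\prod_i d (f i)) * ((\prod_i w (f i) 0 i) * \det (stack_rows f)).
Proof.
rewrite /determinant.
under eq_bigr => s _ do
  rewrite (eq_bigr _ (fun i _ => weighted_gramE d i (s i)))
          bigA_distr_bigA mulr_sumr.
rewrite exchange_big /=; apply: eq_bigr => f _.
rewrite !mulr_sumr; apply: eq_bigr => s _.
rewrite !big_split /= (eq_bigr _ (fun i _ => stack_rowsE f i (s i))).
by rewrite mulrCA !mulrA.
Qed.

Lemma det_stack_rows_perm (f : {ffun 'I_N -> K}) (s : 'S_N) :
  \det (stack_rows [ffun i => f (s i)]) = (-1) ^+ s * \det (stack_rows f).
Proof.
rewrite -det_perm -det_mulmx -row_permE; congr (\det _).
by apply/matrixP => i j; rewrite !mxE ffunE.
Qed.

Lemma det_weighted_gram d :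
  N`!%:R * \det (weighted_gram d) =
  \sum_(f : {ffun 'I_N -> K}) (\prod_i d (f i)) * \det (stack_rows f) ^+ 2.
Proof.
pose c (f : {ffun 'I_N -> K}) := (\prod_i w (f i) 0 i) * \det (stack_rows f).
have sum_perm (s : 'S_N) :
    \sum_(f : {ffun 'I_N -> K}) (\prod_i d (f i)) * c f =
    \sum_(f : {ffun 'I_N -> K}) (\prod_i d (f i)) * c [ffun i => f (s i)].
  rewrite (reindex_inj (h := fun f : {ffun 'I_N -> K} => [ffun i => f (s i)])).
    apply: eq_bigr => f _; congr (_ * _).
    rewrite [RHS](reindex_inj (@perm_inj _ s)).
    by apply: eq_bigr => i _; rewrite ffunE.
  move=> f g /ffunP fg; apply/ffunP => i.
  by have := fg (s^-1 i)%g; rewrite !ffunE permKV.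
have sum_c (f : {ffun 'I_N -> K}) :
    \sum_(s : 'S_N) c [ffun i => f (s i)] = \det (stack_rows f) ^+ 2.
  rewrite expr2 -{1}det_tr mulr_suml; apply: eq_bigr => s _.
  rewrite /c det_stack_rows_perm mulrCA mulrA; congr (_ * _ * _).
  by apply: eq_bigr => i _; rewrite ffunE !mxE.
transitivity
  (\sum_(s : 'S_N) \sum_(f : {ffun 'I_N -> K}) (\prod_i d (f i)) * c f).
  by rewrite det_weighted_gram_expand sumr_const card_Sn mulr_natl.
under eq_bigr => s _ do rewrite (sum_perm s).
rewrite exchange_big /=; apply: eq_bigr => f _.
by rewrite -mulr_sumr sum_c.
Qed.

End WeightedGram.

Section Cholesky.
Variable R : realType.

Lemma psd_congr m n (P : 'M[R]_(m, n)) (A : 'M_m) : psd A -> psd (P^T *m A *m P).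
Proof.
move=> [symA posA]; split; first by rewrite !trmx_mul trmxK symA mulmxA.
by move=> x; have := posA (x *m P^T); rewrite trmx_mul trmxK !mulmxA.
Qed.

Lemma qf_delta n (A : 'M[R]_n) i j :
  (delta_mx 0 i : 'rV_n) *m A *m (delta_mx 0 j : 'rV_n)^T = (A i j)%:M.
Proof. by rewrite [LHS]mx11_scalar trmx_delta -rowE -colE !mxE. Qed.

Lemma psd_diag_ge0 n (A : 'M[R]_n) i : psd A -> 0 <= A i i.
Proof. by move=> [_ /(_ (delta_mx 0 i))]; rewrite qf_delta mxE mulr1n. Qed.

Lemma psd_diag_eq0 n (A : 'M[R]_n) i j : psd A -> A i i = 0 -> A i j = 0.
Proof.
move=> [symA posA] Aii0.
have Aji : A j i = A i j by rewrite -{1}symA mxE.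
pose x (t : R) : 'rV_n := t *: delta_mx 0 i + delta_mx 0 j.
have qf_line (t : R) : (x t *m A *m (x t)^T) 0 0 = 2 * t * A i j + A j j.
  rewrite linearD linearZ /= !mulmxDl !mulmxDr -!scalemxAl -!scalemxAr.
  by rewrite !qf_delta !mxE /= mulr1n Aii0 Aji; ring.
apply/eqP; apply/negPn/negP => Aij_neq0.
have := posA (x (- (A j j + 1) / (2 * A i j))); rewrite qf_line.
have -> : 2 * (- (A j j + 1) / (2 * A i j)) * A i j = - (A j j + 1) by field.
lra.
Qed.

Section Schur.
Variables (n : nat) (A : 'M[R]_(1 + n)).
Hypothesis psdA : psd A.
Local Notation a := (ulsubmx A 0 0).
Local Notation b := (ursubmx A).

Lemma psd_blockE : A = block_mx a%:M b b^T (drsubmx A).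
Proof.
rewrite -[LHS]submxK -mx11_scalar; congr block_mx.
by rewrite trmx_ursub (proj1 psdA).
Qed.

(* The pivot [a] may vanish, but then so does [b], so [a^-1 = 0] is harmless. *)
Lemma psd_pivotK (c : R) : (c == 0) = (a == 0) -> c%:M *m (c^-1 *: b) = b.
Proof.
move=> ca; rewrite mul_scalar_mx scalerA.
have [a0|] := eqVneq a 0; last by rewrite -ca => /mulfV ->; rewrite scale1r.
suff -> : b = 0 by rewrite scaler0.
apply/matrixP => i j; rewrite ord1 !mxE.
by apply: psd_diag_eq0 => //; move: a0; rewrite !mxE.
Qed.

Lemma psd_schur : psd (drsubmx A - a^-1 *: (b^T *m b)).
Proof.
pose P := col_mx (- a^-1 *: b) 1%:M.
suff -> : drsubmx A - a^-1 *: (b^T *m b) = P^T *m A *m P by apply: psd_congr.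
rewrite [X in _ *m X *m P]psd_blockE -mulmxA mul_block_col.
rewrite scaleNr mulmxN psd_pivotK //.
rewrite mulmx1 addNr tr_col_mx mul_row_col mulmx0 add0r trmx1 mul1mx mulmx1.
by rewrite mulmxN -scalemxAr addrC.
Qed.

End Schur.

Lemma psd_gram n (A : 'M[R]_n) : psd A -> exists L : 'M[R]_n, A = L^T *m L.
Proof.
elim: n A => [|n IH] A psdA; first by exists 0; apply/matrixP => [[]].
pose a := ulsubmx (A : 'M_(1 + n)) 0 0.
pose b := ursubmx (A : 'M_(1 + n)).
have [M SM] := IH _ (psd_schur psdA).
pose s := Num.sqrt a.
have a_ge0 : 0 <= a by rewrite /a !mxE; exact: psd_diag_ge0.
have ss : s * s = a by rewrite -expr2 sqr_sqrtr.
have s0a : (s == 0) = (a == 0) by rewrite sqrtr_eq0 le_eqVlt ltNge a_ge0 orbF.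
pose L : 'M_(1 + n) := block_mx s%:M (s^-1 *: b) 0 M.
suff LL : L^T *m L = block_mx a%:M b b^T (drsubmx (A : 'M_(1 + n))).
  by exists L; rewrite [LHS](psd_blockE psdA) -LL.
rewrite tr_block_mx mulmx_block !trmx0 !mul0mx !mulmx0 !addr0 tr_scalar_mx.
congr block_mx.
- by rewrite -scalar_mxM ss.
- by rewrite psd_pivotK.
- by rewrite -[s%:M]tr_scalar_mx -trmx_mul psd_pivotK.
- rewrite -SM [(_ *: b)^T]linearZ -scalemxAl -scalemxAr scalerA -invfM ss.
  by rewrite addrC subrK.
Qed.

End Cholesky.
Section GramPencil.
Variables (R : realDomainType) (N : nat) (La Lb Lc Lx : 'M[R]_N).

Definition gram_pencil (a b c : R) : 'M[R]_N :=
  a *: (La^T *m La) + b *: (Lb^T *m Lb) + c *: (Lc^T *m Lc) + Lx^T *m Lx.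

Definition pencil_row (k : 'I_4 * 'I_N) : 'rV[R]_N :=
  row k.2 (nth 0 [:: La; Lb; Lc; Lx] k.1).

Definition block_weight (p : nat) (x : R) (k : 'I_4 * 'I_N) : R :=
  if k.1 == p :> nat then x else 1.

Definition pencil_weight (a b c : R) (k : 'I_4 * 'I_N) : R :=
  block_weight 0 a k * block_weight 1 b k * block_weight 2 c k.

Definition pencil_coef (a b c : R) (f : {ffun 'I_N -> 'I_4 * 'I_N}) : R :=
  \prod_i pencil_weight a b c (f i).

Lemma weighted_gram_pencil a b c :
  weighted_gram pencil_row (pencil_weight a b c) = gram_pencil a b c.
Proof.
rewrite /weighted_gram -(pair_bigA _ (fun p r => pencil_weight a b c (p, r) *:
  ((pencil_row (p, r))^T *m pencil_row (p, r)))) /=.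
under eq_bigr => p _ do
  rewrite /pencil_weight /block_weight /pencil_row /= -scaler_sumr sum_row_gram.
by rewrite !big_ord_recl big_ord0 /= !mulr1 !mul1r scale1r addr0 !addrA.
Qed.

Lemma det_gram_pencil a b c :
  N`!%:R * \det (gram_pencil a b c) =
  \sum_f pencil_coef a b c f * \det (stack_rows pencil_row f) ^+ 2.
Proof. by rewrite -weighted_gram_pencil det_weighted_gram. Qed.

Lemma prod_block_weight1 p (f : {ffun 'I_N -> 'I_4 * 'I_N}) :
  \prod_i block_weight p 1 (f i) = 1.
Proof. by apply: big1 => i _; rewrite /block_weight if_same. Qed.

Lemma pencil_coef_third_difference f :
  pencil_coef 1 0 0 f + pencil_coef 0 1 0 f + pencil_coef 0 0 1 f
  + pencil_coef 1 1 1 f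
  - (pencil_coef 1 1 0 f + pencil_coef 0 1 1 f + pencil_coef 1 0 1 f
     + pencil_coef 0 0 0 f)
  = (1 - pencil_coef 0 1 1 f) * (1 - pencil_coef 1 0 1 f)
    * (1 - pencil_coef 1 1 0 f).
Proof.
by rewrite /pencil_coef /pencil_weight !big_split /= !prod_block_weight1; ring.
Qed.

Lemma pencil_coef_le1 a b c f :
  0 <= a <= 1 -> 0 <= b <= 1 -> 0 <= c <= 1 -> pencil_coef a b c f <= 1.
Proof.
move=> a01 b01 c01.
have weight01 p x k : 0 <= x <= 1 -> 0 <= block_weight p x k <= 1.
  by rewrite /block_weight; case: ifP; rewrite // ler01 lexx.
apply: prodr_ile1 => i _; rewrite /pencil_weight.
case/andP: (weight01 0 a (f i) a01) => wa_ge0 wa_le1.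
case/andP: (weight01 1 b (f i) b01) => wb_ge0 wb_le1.
case/andP: (weight01 2 c (f i) c01) => wc_ge0 wc_le1.
by rewrite !mulr_ge0 //= !mulr_ile1 ?mulr_ge0.
Qed.

Lemma det_gram_pencil_third_difference_ge0 :
  \det (gram_pencil 1 0 0) + \det (gram_pencil 0 1 0) + \det (gram_pencil 0 0 1)
  + \det (gram_pencil 1 1 1) >=
  \det (gram_pencil 1 1 0) + \det (gram_pencil 0 1 1) + \det (gram_pencil 1 0 1)
  + \det (gram_pencil 0 0 0).
Proof.
have fact_gt0R : 0 < N`!%:R :> R by rewrite ltr0n fact_gt0.
rewrite -subr_ge0 -(pmulr_rge0 _ fact_gt0R) mulrBr !mulrDr.
rewrite !det_gram_pencil -!big_split -sumrB /=.
apply: sumr_ge0 => f _; rewrite -!mulrDl -mulrBl pencil_coef_third_difference.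
apply: mulr_ge0 (sqr_ge0 _).
by rewrite !mulr_ge0 // subr_ge0 pencil_coef_le1 // ?lexx ?ler01.
Qed.

End GramPencil.

Unset Implicit Arguments.

Theorem lemma5p5 (R : realType) (N : nat) (A B C X : 'M[R]_N) :
  psd A -> psd B -> psd C -> psd X ->
  \det (A + X) + \det (B + X) + \det (C + X) + \det (A + B + C + X)
  >= \det (A + B + X) + \det (B + C + X) + \det (C + A + X) + \det X.
Proof.
move=> /psd_gram[La ->] /psd_gram[Lb ->] /psd_gram[Lc ->] /psd_gram[Lx ->].
have := det_gram_pencil_third_difference_ge0 La Lb Lc Lx.
rewrite /gram_pencil !scale1r !scale0r !addr0 !add0r.
by rewrite [_ *m Lc + _ *m La]addrC.
Qed.
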